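(* Let $\mathcal{X}$ be an input space, $\mathcal{Y}=\{-1,1\}$, $\mathcal{D}$ a distribution on $\mathcal{X}\times\mathcal{Y}$ with marginal $\mathcal{P}_{\mathcal{X}}$, and $(x,y)\sim\mathcal{D}$ with $y$ the ground-truth label. Let $\mathcal{F},\mathcal{G}:\mathcal{X}\to\mathcal{Y}$ be classifiers, $\delta,\rho,\epsilon\in(0,1)$ constants, and $\mathcal{A}:\mathcal{X}\to\mathcal{X}$ an attack strategy. Suppose $\mathcal{A}$ is $\rho$-conservative and $\mathcal{F},\mathcal{G}$ have risk at most $\epsilon$. If $\mathcal{A}$ is $(\delta,\mathcal{F})$-effective, then it is also $(\delta+4\epsilon+\rho,\mathcal{G})$-effective.
   Context: Risk of $\mathcal{F}$: $\Pr(\mathcal{F}(x)\neq y)$. Let $\mathcal{P}_{\mathcal{A}(x)}$ denote the distribution of $\mathcal{A}(x)$ for $x\sim\mathcal{P}_{\mathcal{X}}$; $\mathcal{A}$ is $\rho$-conservative if $\sup_{C\subseteq\mathcal{X}}|\mathcal{P}_{\mathcal{X}}(C)-\mathcal{P}_{\mathcal{A}(x)}(C)|\le\rho$. The attack is $(\alpha,\mathcal{F})$-effective (untargeted) if $\Pr(\mathcal{F}(\mathcal{A}(x))\neq y)\ge 1-\alpha$. *)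

From HB Require Import structures.
From mathcomp Require Import all_boot all_order all_algebra.
From mathcomp Require Import all_classical all_reals all_analysis.
Set Implicit Arguments. Unset Strict Implicit. Unset Printing Implicit Defensive.
Import Order.TTheory GRing.Theory Num.Theory.
Local Open Scope classical_set_scope.
Local Open Scope ring_scope.

(* Labels Y = {-1,1} are encoded by bool (true = 1, false = -1);
   only equality/inequality of labels matters. *)
Definition label := bool.

Section Defs.
Context {R : realType} {dO dX : measure_display}
        {Omega : measurableType dO} {X : measurableType dX}.
Variable (P : probability Omega R) (x : Omega -> X) (y : Omega -> label).

Definition risk (F : X -> label) : \bar R :=
  P [set w | F (x w) != y w].

Definition conservative (A : X -> X) (rho : R) : Prop :=
  forall C : set X, measurable C ->
    (`| P (x @^-1` C) - P ((fun w => A (x w)) @^-1` C) | <= rho%:E)%E.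

Definition effective (A : X -> X) (alpha : R) (F : X -> label) : Prop :=
  ((1 - alpha)%:E <= P [set w | F (A (x w)) != y w])%E.
End Defs.

From HB Require Import structures.
From mathcomp Require Import all_boot all_order all_algebra.
From mathcomp Require Import all_classical all_reals all_analysis.
From mathcomp Require Import lra.
Set Implicit Arguments. Unset Strict Implicit. Unset Printing Implicit Defensive.
Import Order.TTheory GRing.Theory Num.Theory.
Local Open Scope classical_set_scope.
Local Open Scope ring_scope.

(* Let C be the set where F and G disagree. Off the error sets of F and G they
   both agree with y, so P(x in C) <= 2 eps; by conservativity the attack lands
   in C with probability at most 2 eps + rho. Outside that event G errs on the
   attacked input whenever F does, so the error of G under attack is at least
   1 - delta - 2 eps - rho, which is even better than the claimed bound. *)

Section disagreement.
Context d (T : measurableType d) (R : realType).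
Implicit Types f g h : T -> bool.

Lemma measurable_neqb f g : measurable_fun setT f -> measurable_fun setT g ->
  measurable [set w | f w != g w].
Proof.
move=> mf mg.
have mfg : measurable_fun setT (fun w => f w && ~~ g w || ~~ f w && g w).
  by apply: measurable_or; apply: measurable_and => //; exact: measurable_neg.
have := mfg measurableT [set true] I; rewrite setTI; congr measurable.
by apply/seteqP; split => w /=; case: (f w); case: (g w).
Qed.

Lemma measure_neq_triangle (mu : {measure set T -> \bar R}) f g h :
  measurable_fun setT f -> measurable_fun setT g -> measurable_fun setT h ->
  (mu [set w | f w != h w] <=
   mu [set w | f w != g w] + mu [set w | g w != h w])%E.
Proof.
move=> mf mg mh.
have mfg := measurable_neqb mf mg; have mgh := measurable_neqb mg mh.
apply: le_trans (measureU2 mu mfg mgh).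
apply: le_measure; rewrite ?inE; [exact: measurable_neqb|exact: measurableU|].
by move=> w /=; case: (f w); case: (g w); case: (h w) => //= _;
  first [by left | by right].
Qed.

End disagreement.

Lemma conservative_le (R : realType) (dO dX : measure_display)
  (Omega : measurableType dO) (X : measurableType dX)
  (P : probability Omega R) (x : Omega -> X) (A : X -> X) (rho : R)
  (C : set X) :
  measurable_fun setT x -> measurable_fun setT A ->
  conservative P x A rho -> measurable C ->
  (P ((fun w => A (x w)) @^-1` C) <= P (x @^-1` C) + rho%:E)%E.
Proof.
move=> mx mA consA mC.
have mxC : measurable (x @^-1` C) by rewrite -[_ @^-1` _]setTI; exact: mx.
have finxC : P (x @^-1` C) \is a fin_num by exact: fin_num_measure.
rewrite addeC -lee_subel_addr //; apply: le_trans (consA C mC).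
rewrite -abseN oppeB ?fin_num_adde_defr // addeC; exact: lee_abs.
Qed.

Theorem theorem5 (R : realType) (dO dX : measure_display)
  (Omega : measurableType dO) (X : measurableType dX)
  (P : probability Omega R) (x : Omega -> X) (y : Omega -> label)
  (F G : X -> label) (A : X -> X) (delta rho eps : R) :
  measurable_fun setT x -> measurable_fun setT y ->
  measurable_fun setT F -> measurable_fun setT G -> measurable_fun setT A ->
  0 < delta < 1 -> 0 < rho < 1 -> 0 < eps < 1 ->
  conservative P x A rho ->
  (risk P x y F <= eps%:E)%E -> (risk P x y G <= eps%:E)%E ->
  effective P x y A delta F ->
  effective P x y A (delta + 4 * eps + rho) G.
Proof.
move=> mx my mF mG mA _ _ /andP[eps_gt0 _] consA riskF riskG effF.
have mAx : measurable_fun setT (fun w => A (x w)) by exact: measurableT_comp.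
set C := [set z | F z != G z].
have PxC : (P (x @^-1` C) <= (eps + eps)%:E)%E.
  have yGC : [set w | y w != G (x w)] = [set w | G (x w) != y w].
    by apply/seteqP; split => w; rewrite /= eq_sym.
  apply: le_trans (measure_neq_triangle P (measurableT_comp mF mx) my
                     (measurableT_comp mG mx)) _.
  by rewrite yGC EFinD; exact: leeD riskF riskG.
have PAxC := conservative_le mx mA consA (measurable_neqb mF mG).
have errFA := measure_neq_triangle P (measurableT_comp mF mAx)
  (measurableT_comp mG mAx) my.
have finGA : P [set w | G (A (x w)) != y w] \is a fin_num.
  exact/fin_num_measure/measurable_neqb/my/measurableT_comp.
rewrite /effective (@le_trans _ _ (1 - delta - (eps + eps + rho))%:E) ?lee_fin //;
  first by lra.
rewrite EFinB lee_subel_addl //.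
apply: le_trans effF (le_trans errFA _); apply: leeD => //.
by apply: le_trans PAxC _; rewrite EFinD; exact: leeD PxC (lexx _).
Qed.
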